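(* Let $\Delta\in\mathcal{H}_{\ge3}$ be a hypergraph on $[d]$ and let $F=F_\sim\wedge F_{\not\sim}$ be a consistent formula on $[d]$. Then there is a unique hypergraph $\Delta_F$ on the vertex set $[d]/F$ that is minimal (with respect to $\le$) among the hypergraphs $\widetilde\Delta$ on $[d]/F$ satisfying: (1) for every $e\in\Delta$ with $|\{\bar i_F: i\in e\}|\ge3$ there is $e'\in\widetilde\Delta$ with $\{\bar i_F:i\in e\}\subseteq e'$; (2) there is no atom $(c_1\not\sim c_2)$ of $F_{\not\sim}$ and no pair of distinct edges $e_1,e_2\in\widetilde\Delta$ with $\{\bar{c_1}_F,\bar{c_2}_F\}\subseteq e_1\cap e_2$. Moreover $\Delta_F=(\Delta_{F_\sim})_{F_{\not\sim}}$.
   Context: A hypergraph on a finite vertex set $V$ is a collection of subsets of $V$ (edges) none properly contained in another; $\Delta_1\le\Delta_2$ means every edge of $\Delta_1$ is contained in some edge of $\Delta_2$; $\mathcal{H}_{\ge3}$ denotes hypergraphs all of whose edges have size $\ge3$. A formula on $[d]$ is a conjunction of atoms $(x\sim y)$ and $(x\not\sim y)$ with $x\neq y\in[d]$; $F_\sim$ is the conjunction of its $\sim$-atoms and $F_{\not\sim}$ that of its $\not\sim$-atoms. The $\sim$-atoms generate an equivalence relation on $[d]$, with set of classes $[d]/F$ and class $\bar i_F$ of $i$; $F$ is consistent if no atom $(i\not\sim j)$ has $\bar i_F=\bar j_F$. $\Delta_{F_\sim}$ is the hypergraph on $[d]/F$ consisting of the inclusion-maximal sets among $\{\bar i_F:i\in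 e\}$, for $e\in\Delta$ with $|\{\bar i_F:i\in e\}|\ge3$. For a hypergraph $\Gamma$ on $[d]/F$ with edges of size $\ge3$, $\Gamma_{F_{\not\sim}}$ denotes the unique minimal (for $\le$) hypergraph $\Gamma'$ on $[d]/F$ with $\Gamma\le\Gamma'$ such that no atom $(c_1\not\sim c_2)$ of $F_{\not\sim}$ and no two distinct edges $e_1,e_2\in\Gamma'$ satisfy $\{\bar{c_1}_F,\bar{c_2}_F\}\subseteq e_1\cap e_2$ (this exists and is unique). *)

From mathcomp Require Import all_boot.
Set Implicit Arguments. Unset Strict Implicit. Unset Printing Implicit Defensive.

Section Hypergraphs.
Variable T : finType.

Definition is_hypergraph (V : {set T}) (H : {set {set T}}) : Prop :=
  (forall e, e \in H -> e \subset V) /\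
  (forall e1 e2, e1 \in H -> e2 \in H -> e1 \subset e2 -> e1 = e2).

Definition hle (H1 H2 : {set {set T}}) : Prop :=
  forall e1, e1 \in H1 -> exists2 e2, e2 \in H2 & e1 \subset e2.

Definition is_hypergraph_ge3 (V : {set T}) (H : {set {set T}}) : Prop :=
  is_hypergraph V H /\ (forall e, e \in H -> 3 <= #|e|).

Definition maxsets (S : {set {set T}}) : {set {set T}} :=
  [set s in S | [forall t in S, (s \subset t) ==> (s == t)]].

Definition hminimal (V : {set T}) (P : {set {set T}} -> Prop)
    (H : {set {set T}}) : Prop :=
  [/\ is_hypergraph V H, P H &
      forall H', is_hypergraph V H' -> P H' -> hle H' H -> H' = H].
End Hypergraphs.

(** Formulas on [d]: F_sim is a list of atoms (x ~ y), F_nsim a list of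
    atoms (x !~ y), each given as a pair (x, y) with x <> y. *)
Definition atoms_ok (d : nat) (A : seq ('I_d * 'I_d)) : Prop :=
  forall a, a \in A -> a.1 != a.2.

(** symmetric relation given by the ~-atoms; its reflexive-transitive
    closure [connect] is the generated equivalence relation. *)
Definition sim_rel (d : nat) (Fs : seq ('I_d * 'I_d)) : rel 'I_d :=
  fun x y => ((x, y) \in Fs) || ((y, x) \in Fs).

Definition cls (d : nat) (Fs : seq ('I_d * 'I_d)) (i : 'I_d) : {set 'I_d} :=
  [set j | connect (sim_rel Fs) i j].

Definition quot (d : nat) (Fs : seq ('I_d * 'I_d)) : {set {set 'I_d}} :=
  [set cls Fs i | i : 'I_d].

Definition img (d : nat) (Fs : seq ('I_d * 'I_d)) (e : {set 'I_d})
  : {set {set 'I_d}} := [set cls Fs i | i in e].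

Definition consistent (d : nat) (Fs Fn : seq ('I_d * 'I_d)) : Prop :=
  forall a, a \in Fn -> cls Fs a.1 <> cls Fs a.2.

Definition hsim (d : nat) (Fs : seq ('I_d * 'I_d)) (D : {set {set 'I_d}})
  : {set {set {set 'I_d}}} :=
  maxsets [set img Fs e | e in D & 3 <= #|img Fs e|].

Definition cond1 (d : nat) (Fs : seq ('I_d * 'I_d)) (D : {set {set 'I_d}})
    (H : {set {set {set 'I_d}}}) : Prop :=
  forall e, e \in D -> 3 <= #|img Fs e| ->
    exists2 e', e' \in H & img Fs e \subset e'.

Definition cond2 (d : nat) (Fs Fn : seq ('I_d * 'I_d))
    (H : {set {set {set 'I_d}}}) : Prop :=
  forall c, c \in Fn -> forall e1 e2, e1 \in H -> e2 \in H -> e1 <> e2 ->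
    ~ ([set cls Fs c.1; cls Fs c.2] \subset e1 :&: e2).

Definition is_nsim_closure (d : nat) (Fs Fn : seq ('I_d * 'I_d))
    (G G' : {set {set {set 'I_d}}}) : Prop :=
  hminimal (quot Fs) (fun H => hle G H /\ cond2 Fs Fn H) G'.

From Stdlib Require Import Setoid.
From mathcomp Require Import all_boot.

Set Implicit Arguments. Unset Strict Implicit. Unset Printing Implicit Defensive.

(* Call two sets glued when both contain a common forbidden pair {c1, c2}.
   Any admissible hypergraph must put glued edges into a single edge, so every
   set obtained from the images of the edges of Delta by repeatedly uniting
   glued sets lies inside an edge of it.  The maximal such sets form a
   hypergraph that covers the images and has no two glued edges; being below
   every admissible hypergraph, it is the unique minimal one.  Since the
   construction only sees the images up to inclusion, starting from the
   maximal images Delta_{F_sim} gives the same hypergraph. *)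

Lemma fixset_min (T : finType) (F : {set T} -> {set T}) (G : {set T}) :
  {homo F : X Y / X \subset Y} -> F G \subset G -> fixset F \subset G.
Proof.
move=> F_mono FG; rewrite /fixset; elim: #|T| => [|k IHk] /=; first exact: sub0set.
exact: subset_trans (F_mono _ _ IHk) FG.
Qed.

Section Maxsets.
Variable T : finType.
Implicit Types (S H : {set {set T}}) (X Y : {set T}).

Lemma maxsets_sub S X : X \in maxsets S -> X \in S.
Proof. by rewrite inE => /andP[]. Qed.

Lemma maxsets_max S X Y : X \in maxsets S -> Y \in S -> X \subset Y -> X = Y.
Proof.
rewrite inE => /andP[_ /forallP /(_ Y)] XmaxY YS sXY.
by move: XmaxY; rewrite YS sXY => /eqP.
Qed.

Lemma maxsets_exists S X : X \in S -> exists2 Y, Y \in maxsets S & X \subset Y.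
Proof.
move=> XS; have [Y maxY sXY] := @maxset_exists T (fun B => B \in S) X XS.
exists Y => //; rewrite inE (maxsetp maxY); apply/forallP=> Z.
by apply/implyP=> ZS; apply/implyP=> sYZ; rewrite (maxsetsup maxY ZS sYZ).
Qed.

Lemma hle_maxsetsl S H : hle (maxsets S) H <-> hle S H.
Proof.
split=> [leSH X /maxsets_exists[Y /leSH[e eH sYe] sXY] | leSH X /maxsets_sub].
  by exists e => //; apply: subset_trans sYe.
exact: leSH.
Qed.

Lemma hle_anti (V : {set T}) H1 H2 : is_hypergraph V H1 -> is_hypergraph V H2 ->
  hle H1 H2 -> hle H2 H1 -> H1 = H2.
Proof.
have incl Ha Hb : is_hypergraph V Ha -> hle Ha Hb -> hle Hb Ha -> Ha \subset Hb.
  move=> [_ antiA] leAB leBA; apply/subsetP=> X XA.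
  have [Y YB sXY] := leAB X XA; have [Z ZA sYZ] := leBA Y YB.
  have XZ := antiA X Z XA ZA (subset_trans sXY sYZ); subst Z.
  by have -> : X = Y by apply/eqP; rewrite eqEsubset sXY.
by move=> h1 h2 le12 le21; apply/eqP; rewrite eqEsubset !incl.
Qed.
End Maxsets.

Section Merging.
Variables (T : finType) (S0 P : {set {set T}}).
Implicit Types (S H : {set {set T}}) (X Y : {set T}).

Definition glued X Y := [exists p in P, p \subset X :&: Y].

Lemma gluedSS X1 Y1 X2 Y2 :
  X1 \subset X2 -> Y1 \subset Y2 -> glued X1 Y1 -> glued X2 Y2.
Proof.
move=> sX sY /existsP[p /andP[pP sp]]; apply/existsP; exists p.
by rewrite pP (subset_trans sp) ?setISS.
Qed.

Definition separated H := forall X Y, X \in H -> Y \in H -> glued X Y -> X = Y.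

Definition merge_step S := S0 :|: [set X :|: Y | X in S, Y in S & glued X Y].

Lemma merge_step_mono : {homo merge_step : S1 S2 / S1 \subset S2}.
Proof.
move=> S1 S2 sS; apply/subsetP=> Z; rewrite !inE => /orP[-> // |].
case/imset2P=> X Y XS; rewrite inE => /andP[YS gXY] ->.
by apply/orP; right; apply/imset2P; exists X Y; rewrite ?inE ?(subsetP sS).
Qed.

Definition merge_closure := fixset merge_step.

Lemma merge_closureE : merge_step merge_closure = merge_closure.
Proof. exact: fixsetK merge_step_mono. Qed.

Lemma merge_closure_seed X : X \in S0 -> X \in merge_closure.
Proof. by move=> XS0; rewrite -merge_closureE inE XS0. Qed.

Lemma merge_closureU X Y : X \in merge_closure -> Y \in merge_closure ->
  glued X Y -> X :|: Y \in merge_closure.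
Proof.
move=> XM YM gXY; rewrite -merge_closureE inE; apply/orP; right.
by apply/imset2P; exists X Y; rewrite ?inE ?YM.
Qed.

Lemma merge_closure_min S :
  (forall X, X \in S0 -> X \in S) ->
  (forall X Y, X \in S -> Y \in S -> glued X Y -> X :|: Y \in S) ->
  merge_closure \subset S.
Proof.
move=> seedS closedS; apply: fixset_min merge_step_mono _.
apply/subsetP=> Z; rewrite inE => /orP[/seedS // |].
by case/imset2P=> X Y XS; rewrite inE => /andP[YS gXY] ->; apply: closedS.
Qed.

Definition merged := maxsets merge_closure.

Lemma hle_seed_merged : hle S0 merged.
Proof. by move=> X XS0; apply/maxsets_exists/merge_closure_seed. Qed.

Lemma merged_separated : separated merged.
Proof.
move=> X Y XM YM gXY.
have XYM := merge_closureU (maxsets_sub XM) (maxsets_sub YM) gXY.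
by rewrite [LHS](maxsets_max XM XYM (subsetUl X Y)) [RHS](maxsets_max YM XYM (subsetUr X Y)).
Qed.

Lemma merged_least H : hle S0 H -> separated H -> hle merged H.
Proof.
move=> leS0H sepH; apply/hle_maxsetsl => X XM.
pose below := [set Z : {set T} | [exists e in H, Z \subset e]].
suff /subsetP/(_ X XM) : merge_closure \subset below.
  by rewrite inE => /existsP[e /andP[eH sXe]]; exists e.
apply: merge_closure_min => [Z /leS0H[e eH sZe] | Z1 Z2].
  by rewrite inE; apply/existsP; exists e; rewrite eH.
rewrite !inE => /existsP[e1 /andP[e1H s1]] /existsP[e2 /andP[e2H s2]] g12.
have e12 : e1 = e2 by apply: sepH => //; apply: gluedSS g12.
subst e2; apply/existsP; exists e1; by rewrite e1H subUset s1 s2.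
Qed.

Lemma merged_hypergraph (V : {set T}) :
  (forall X, X \in S0 -> X \subset V) -> is_hypergraph V merged.
Proof.
move=> S0V; split=> [X /maxsets_sub XM | X Y XM /maxsets_sub]; last first.
  exact: maxsets_max XM.
have /subsetP/(_ X XM) : merge_closure \subset [set Z : {set T} | Z \subset V].
  apply: merge_closure_min => [Z /S0V | Z1 Z2]; rewrite !inE // => s1 s2 _.
  by rewrite subUset s1 s2.
by rewrite inE.
Qed.

Lemma merged_unique_hminimal (V : {set T}) (Adm : {set {set T}} -> Prop) :
  (forall X, X \in S0 -> X \subset V) ->
  (forall H, is_hypergraph V H -> Adm H <-> hle S0 H /\ separated H) ->
  hminimal V Adm merged /\ (forall H, hminimal V Adm H -> H = merged).
Proof.
move=> S0V AdmE; have hypM := merged_hypergraph S0V.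
have AdmM : Adm merged by apply/(AdmE _ hypM); split; [exact: hle_seed_merged | exact: merged_separated].
split=> [| H [hypH /AdmE-/(_ hypH)[leS0H sepH] minH]].
  split=> // H hypH /AdmE-/(_ hypH)[leS0H sepH] leHM.
  exact: hle_anti hypH hypM leHM (merged_least leS0H sepH).
by symmetry; apply: minH => //; apply: merged_least.
Qed.
End Merging.

Section Quotient.
Variables (d : nat) (D : {set {set 'I_d}}) (Fs Fn : seq ('I_d * 'I_d)).

Definition large_images := [set img Fs e | e in D & 3 <= #|img Fs e|].

Definition forbidden_pairs := [set [set cls Fs c.1; cls Fs c.2] | c in Fn].

Lemma large_images_sub_quot X : X \in large_images -> X \subset quot Fs.
Proof.
case/imsetP=> e _ ->; apply/subsetP=> _ /imsetP[i _ ->].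
by apply/imsetP; exists i.
Qed.

Lemma cond1E H : cond1 Fs D H <-> hle large_images H.
Proof.
split=> [c1H X /imsetP[e] | leH e eD large].
  by rewrite inE => /andP[eD large] ->; apply: c1H.
by apply: leH; apply/imsetP; exists e; rewrite // inE eD.
Qed.

Lemma cond2E H : cond2 Fs Fn H <-> separated forbidden_pairs H.
Proof.
split=> [c2H X Y XH YH /existsP[p /andP[/imsetP[c cFn ->] sXY]]
        | sepH c cFn X Y XH YH neXY sXY].
  by case: (eqVneq X Y) => // /eqP neXY; case: (c2H c cFn X Y XH YH neXY).
apply: neXY (sepH X Y XH YH _); apply/existsP; exists [set cls Fs c.1; cls Fs c.2].
by rewrite sXY andbT; apply/imsetP; exists c.
Qed.
End Quotient.

Theorem mainTheorem5 (d : nat) (D : {set {set 'I_d}})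
    (Fs Fn : seq ('I_d * 'I_d)) :
  is_hypergraph_ge3 [set: 'I_d] D ->
  atoms_ok Fs -> atoms_ok Fn ->
  consistent Fs Fn ->
  exists DF : {set {set {set 'I_d}}},
    [/\ hminimal (quot Fs) (fun H => cond1 Fs D H /\ cond2 Fs Fn H) DF,
        (forall DF', hminimal (quot Fs)
                       (fun H => cond1 Fs D H /\ cond2 Fs Fn H) DF' -> DF' = DF),
        is_nsim_closure Fs Fn (hsim Fs D) DF &
        (forall G', is_nsim_closure Fs Fn (hsim Fs D) G' -> G' = DF)].
Proof.
move=> _ _ _ _.
have imgs_sub_quot := @large_images_sub_quot d D Fs.
have admE H : cond1 Fs D H /\ cond2 Fs Fn H <->
    hle (large_images D Fs) H /\ separated (forbidden_pairs Fs Fn) H.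
  by rewrite cond1E cond2E.
have closE H : hle (hsim Fs D) H /\ cond2 Fs Fn H <->
    hle (large_images D Fs) H /\ separated (forbidden_pairs Fs Fn) H.
  by rewrite hle_maxsetsl cond2E.
have [minDF uniqDF] := merged_unique_hminimal imgs_sub_quot (fun H _ => admE H).
have [closDF uniq_clos] := merged_unique_hminimal imgs_sub_quot (fun H _ => closE H).
by exists (merged (large_images D Fs) (forbidden_pairs Fs Fn)); split.
Qed.
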